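(* Let $T(n)$ denote the number of fixed polyiamonds with $n$ cells. For all positive integers $\ell,m$, $T(\ell+m)\ge \frac{1}{3}\,T(\ell)\,T(m)$.
   Context: The triangular lattice is the tiling of the plane by equilateral triangles; its cells come in two orientations. A polyiamond with $n$ cells is a finite set of $n$ cells of the triangular lattice that is edge-connected, i.e. the graph on the cells in which two cells are adjacent when they share an edge is connected. Two polyiamonds are considered the same if one is a translate of the other (no rotations or reflections allowed); $T(n)$ is the number of such translation classes of polyiamonds with $n$ cells. *)

From HB Require Import structures.
From mathcomp Require Import all_boot all_order all_algebra.
From mathcomp Require Import finmap.
From mathcomp Require Import boolp classical_sets cardinality.
Set Implicit Arguments. Unset Strict Implicit. Unset Printing Implicit Defensive.
Import GRing.Theory Num.Theory.

Local Open Scope fset_scope.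
Local Open Scope ring_scope.

(* Lattice points are x*a + y*b with
   (a,b) a basis of unit vectors at 60 degrees, x y : int.
   ((x,y), false) = "up"   triangle with vertices (x,y),(x+1,y),(x,y+1);
   ((x,y), true)  = "down" triangle with vertices (x+1,y),(x,y+1),(x+1,y+1).
   Every cell of the lattice is exactly one of these. *)
Definition cell : Type := (int * int * bool)%type.

(* up (x,y) shares one edge with each of down (x,y), down (x-1,y),
   down (x,y-1); these are all edge-adjacencies of the lattice. *)
Definition up_down_adj (u d : int * int) : bool :=
  [|| d == u, d == (u.1 - 1, u.2) | d == (u.1, u.2 - 1)].

Definition adj (c d : cell) : bool :=
  match c.2, d.2 with
  | false, true => up_down_adj c.1 d.1
  | true, false => up_down_adj d.1 c.1
  | _, _ => false
  end.

Definition edge_connected (P : {fset cell}) : Prop :=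
  forall c d, c \in P -> d \in P ->
    exists s : seq cell, [/\ path adj c s, last c s = d & all (fun e => e \in P) s].

Definition polyiamond (n : nat) (P : {fset cell}) : Prop :=
  #|` P| = n /\ edge_connected P.

Definition translate (t : int * int) (P : {fset cell}) : {fset cell} :=
  [fset ((c.1.1 + t.1, c.1.2 + t.2), c.2) | c in P].

Definition tclass (P : {fset cell}) : set {fset cell} :=
  [set Q | exists t, Q = translate t P].

(* T n = number of translation classes of polyiamonds with n cells
   (fset_set of a finite set gives exactly its elements). *)
Definition T (n : nat) : nat :=
  #|` fset_set [set C : set {fset cell} | exists P, polyiamond n P /\ C = tclass P] |.

From mathcomp Require Import all_boot all_order all_algebra.
From mathcomp Require Import finmap.
From mathcomp Require Import boolp classical_sets cardinality.
From mathcomp Require Import zify.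
Set Implicit Arguments. Unset Strict Implicit. Unset Printing Implicit Defensive.
Import Order.TTheory GRing.Theory Num.Theory.
Local Open Scope fset_scope.
Local Open Scope ring_scope.

(* Order cells by the abscissa of their centroids.  Given polyiamonds A and B,
   let a be a rightmost cell of A and n the cell across the right edge of a.
   Reflecting B in a horizontal line if necessary (this preserves abscissae and
   swaps the two orientations), some leftmost cell of B has the orientation of n,
   so a translate B' of B has that cell at n.  Then A lies strictly to the left
   of B', the union of A and B' is a polyiamond with l + m cells, and A is
   recovered from the union as its l leftmost cells.  Hence the map sending the
   classes of A and B to the class of the union together with the reflection bit
   is injective, which gives even T(l) T(m) <= 2 T(l + m). *)

Lemma fset_arg_max (K : choiceType) (d : Order.disp_t) (T : orderType d)
    (f : K -> T) (P : {fset K}) :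
  P != fset0 -> exists2 a, a \in P & forall c, c \in P -> (f c <= f a)%O.
Proof.
case: (fset_0Vmem P) => [-> | [x xP] _]; first by rewrite eqxx.
case: (@arg_maxP _ _ _ [` xP] predT (fun i : P => f (val i)) isT) => i _ imax.
by exists (val i) => [|c cP]; [exact: valP | exact: (imax [` cP])].
Qed.

Lemma fset_arg_min (K : choiceType) (d : Order.disp_t) (T : orderType d)
    (f : K -> T) (P : {fset K}) :
  P != fset0 -> exists2 a, a \in P & forall c, c \in P -> (f a <= f c)%O.
Proof.
case: (fset_0Vmem P) => [-> | [x xP] _]; first by rewrite eqxx.
case: (@arg_minP _ _ _ [` xP] predT (fun i : P => f (val i)) isT) => i _ imin.
by exists (val i) => [|c cP]; [exact: valP | exact: (imin [` cP])].
Qed.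

Lemma cardfsM (K K' : choiceType) (A : {fset K}) (B : {fset K'}) :
  #|` A `*` B| = (#|` A| * #|` B|)%N.
Proof.
rewrite !card_fset_sum1 big_imfset2 /=; last by move=> [? ?] [? ?] _ _ [-> ->].
by rewrite big_distrl; apply: eq_bigr => ? _; rewrite /= mul1n.
Qed.

Lemma card_le_of_rel (U V : choiceType) (X : {fset U}) (Y : {fset V}) (R : U -> V -> Prop) :
  (forall x, x \in X -> exists2 y, y \in Y & R x y) ->
  (forall x x' y, x \in X -> x' \in X -> R x y -> R x' y -> x = x') ->
  (#|` X| <= #|` Y|)%N.
Proof.
move=> R_total R_inj.
have /choice[g gP] : forall x : X, exists y : Y, R (val x) (val y).
  by move=> x; have [y yY xy] := R_total _ (valP x); exists [` yY].
rewrite !cardfE; apply: (@leq_card _ _ g) => x x' gxx'; apply: val_inj.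
by apply: (R_inj _ _ _ (valP x) (valP x') (gP x)); rewrite gxx'.
Qed.

Definition translate_cell (t : int * int) (c : cell) : cell :=
  ((c.1.1 + t.1, c.1.2 + t.2), c.2).

Lemma translateE t P : translate t P = [fset translate_cell t c | c in P].
Proof. by []. Qed.

(* Reflection in the horizontal axis: (x, y) |-> (x + y, - y) on lattice points. *)
Definition mirror_cell (c : cell) : cell :=
  if c.2 then ((c.1.1 + c.1.2 + 1, - c.1.2 - 1), false)
  else ((c.1.1 + c.1.2, - c.1.2 - 1), true).

Definition mirror (P : {fset cell}) : {fset cell} := [fset mirror_cell c | c in P].

Definition mirror_if (b : bool) (P : {fset cell}) : {fset cell} :=
  if b then mirror P else P.

(* Twice the abscissa of the centroid of [c], for the basis a = (1, 0),
   b = (1/2, sqrt 3 / 2). *)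
Definition column (c : cell) : int := 2 * c.1.1 + c.1.2 + (if c.2 then 2 else 1).

Definition right_neighbour (c : cell) : cell :=
  if c.2 then ((c.1.1 + 1, c.1.2), false) else (c.1, true).

Lemma adj_sym c d : adj c d = adj d c.
Proof. by case: c => [u []]; case: d => [v []]. Qed.

Lemma adj_translate_cell t c d : adj (translate_cell t c) (translate_cell t d) = adj c d.
Proof.
case: c => [[x y] []]; case: d => [[x' y'] []]; case: t => [t1 t2];
rewrite /adj /up_down_adj /translate_cell /= ?xpair_eqE //; apply/idP/idP; lia.
Qed.

Lemma adj_mirror_cell c d : adj (mirror_cell c) (mirror_cell d) = adj c d.
Proof.
case: c => [[x y] []]; case: d => [[x' y'] []];
rewrite /adj /up_down_adj /mirror_cell /= ?xpair_eqE //; apply/idP/idP; lia.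
Qed.

Lemma adj_right_neighbour c : adj c (right_neighbour c).
Proof.
by case: c => [[x y] []]; rewrite /adj /up_down_adj /right_neighbour /= ?xpair_eqE; lia.
Qed.

Lemma adj_coord_bound c d : adj c d ->
  (`|d.1.1 - c.1.1| <= 1) && (`|d.1.2 - c.1.2| <= 1).
Proof.
case: c => [[x y] []]; case: d => [[x' y'] []];
rewrite /adj /up_down_adj /= ?xpair_eqE //; lia.
Qed.

Lemma translate_cell_inj t : injective (translate_cell t).
Proof. case: t => t1 t2 [[x y] b] [[x' y'] b'] [] ? ? ->; congr (_, _, _); lia. Qed.

Lemma translate_cellD s t c :
  translate_cell s (translate_cell t c) = translate_cell (t.1 + s.1, t.2 + s.2) c.
Proof. by case: c => [[x y] b]; rewrite /translate_cell /= !addrA. Qed.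

Lemma translate_cell0 c : translate_cell (0, 0) c = c.
Proof. by case: c => [[x y] b]; rewrite /translate_cell /= !addr0. Qed.

Lemma translate_cell_onto q n : q.2 = n.2 -> exists t, translate_cell t q = n.
Proof.
case: q n => [[x y] b] [[x' y'] b'] /= <-.
by exists (x' - x, y' - y); rewrite /translate_cell /= !(addrC x, addrC y) !subrK.
Qed.

Lemma mirror_cellK : involutive mirror_cell.
Proof. case => [[x y] []]; rewrite /mirror_cell /=; congr (_, _, _); lia. Qed.

Lemma mirror_cell_inj : injective mirror_cell.
Proof. exact: inv_inj mirror_cellK. Qed.

Lemma mirror_cell_orientation c : (mirror_cell c).2 = ~~ c.2.
Proof. by case: c => [u []]. Qed.

Lemma mirror_translate_cell t c :
  mirror_cell (translate_cell t c) = translate_cell (t.1 + t.2, - t.2) (mirror_cell c).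
Proof.
case: c => [[x y] []]; case: t => t1 t2;
rewrite /mirror_cell /translate_cell /=; congr (_, _, _); lia.
Qed.

Lemma column_translate_cell t c : column (translate_cell t c) = column c + (2 * t.1 + t.2).
Proof. case: c => [[x y] b]; case: t => t1 t2; rewrite /column /translate_cell /=; lia. Qed.

Lemma column_mirror_cell c : column (mirror_cell c) = column c.
Proof. case: c => [[x y] []]; rewrite /column /mirror_cell /=; lia. Qed.

Lemma column_right_neighbour c : column (right_neighbour c) = column c + 1.
Proof. case: c => [[x y] []]; rewrite /column /right_neighbour /=; lia. Qed.

Lemma edge_connected_map (f : cell -> cell) P :
  (forall c d, adj (f c) (f d) = adj c d) ->
  edge_connected P -> edge_connected [fset f c | c in P].
Proof.
move=> adj_f conP _ _ /imfsetP[c /= cP ->] /imfsetP[d /= dP ->].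
have [s [cs sd sP]] := conP c d cP dP.
exists (map f s); split.
- by rewrite path_map (@eq_path _ _ adj adj_f).
- by rewrite last_map sd.
- by rewrite all_map; apply: sub_all sP => e eP; apply: in_imfset.
Qed.

Lemma polyiamond_map (f : cell -> cell) n P :
  injective f -> (forall c d, adj (f c) (f d) = adj c d) ->
  polyiamond n P -> polyiamond n [fset f c | c in P].
Proof.
by move=> f_inj adj_f [cardP conP]; split; [rewrite card_imfset | exact: edge_connected_map].
Qed.

Lemma polyiamond_translate t n P : polyiamond n P -> polyiamond n (translate t P).
Proof. exact/polyiamond_map/adj_translate_cell/translate_cell_inj. Qed.

Lemma polyiamond_mirror_if b n P : polyiamond n P -> polyiamond n (mirror_if b P).
Proof. by case: b => //; apply/polyiamond_map/adj_mirror_cell/mirror_cell_inj. Qed.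

Lemma card_translate t P : #|` translate t P| = #|` P|.
Proof. exact/card_imfset/translate_cell_inj. Qed.

Lemma translateU t A B : translate t (A `|` B) = translate t A `|` translate t B.
Proof. exact: imfsetU. Qed.

Lemma translateD s t P :
  translate s (translate t P) = translate (t.1 + s.1, t.2 + s.2) P.
Proof.
by rewrite !translateE -imfset_comp; apply: eq_imfset => // c; apply: translate_cellD.
Qed.

Lemma translate0 P : translate (0, 0) P = P.
Proof.
by rewrite translateE -[RHS]imfset_id; apply: eq_imfset => // c; apply: translate_cell0.
Qed.

Lemma mirrorK : involutive mirror.
Proof.
move=> P; rewrite /mirror -imfset_comp -[RHS]imfset_id.
by apply: eq_imfset => // c; apply: mirror_cellK.
Qed.

Lemma mirror_translate t P : mirror (translate t P) = translate (t.1 + t.2, - t.2) (mirror P).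
Proof.
rewrite /mirror !translateE -!imfset_comp.
by apply: eq_imfset => // c; apply: mirror_translate_cell.
Qed.

Lemma tclass_translate t P : tclass (translate t P) = tclass P.
Proof.
apply/seteqP; split => Q /= [s ->]; first by rewrite translateD; eexists.
exists (s.1 - t.1, s.2 - t.2); rewrite translateD; congr translate.
by case: s t => [s1 s2] [t1 t2] /=; congr (_, _); lia.
Qed.

Lemma tclassP P Q : tclass P = tclass Q <-> exists t, P = translate t Q.
Proof.
split => [eqPQ | [t ->]]; last exact: tclass_translate.
have : tclass Q P by rewrite -eqPQ; exists (0, 0); rewrite translate0.
by case=> t ->; exists t.
Qed.

Lemma tclass_mirror_inj P Q : tclass (mirror P) = tclass (mirror Q) -> tclass P = tclass Q.
Proof.
case/tclassP => t /(congr1 mirror); rewrite mirror_translate !mirrorK => ->.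
exact: tclass_translate.
Qed.

Definition linked (P : {fset cell}) (c d : cell) : Prop :=
  exists s : seq cell, [/\ path adj c s, last c s = d & all (fun e => e \in P) s].

Lemma linked_trans P c x d : linked P c x -> linked P x d -> linked P c d.
Proof.
move=> [s [cs sx sP]] [r [xr rd rP]]; exists (s ++ r).
by rewrite cat_path last_cat all_cat sx cs xr rd sP rP.
Qed.

Lemma linked_adj P c d : adj c d -> d \in P -> linked P c d.
Proof. by move=> cd dP; exists [:: d]; rewrite /= cd dP. Qed.

Lemma linked_sub P Q c d : P `<=` Q -> linked P c d -> linked Q c d.
Proof. by move=> /fsubsetP PQ [s [cs sd sP]]; exists s; split=> //; apply: sub_all sP. Qed.

Lemma edge_connected_union A B a b : edge_connected A -> edge_connected B ->
  a \in A -> b \in B -> adj a b -> edge_connected (A `|` B).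
Proof.
move=> conA conB aA bB ab c d cAB dAB; change (linked (A `|` B) c d).
have linkA x y : x \in A -> y \in A -> linked (A `|` B) x y.
  by move=> xA yA; apply: linked_sub (fsubsetUl A B) (conA x y xA yA).
have linkB x y : x \in B -> y \in B -> linked (A `|` B) x y.
  by move=> xB yB; apply: linked_sub (fsubsetUr A B) (conB x y xB yB).
have linkAB : linked (A `|` B) a b by apply: (@linked_adj _ _ _ ab); rewrite in_fsetU bB orbT.
have linkBA : linked (A `|` B) b a.
  by rewrite adj_sym in ab; apply: (@linked_adj _ _ _ ab); rewrite in_fsetU aA.
move: cAB dAB; rewrite !in_fsetU => /orP[cA | cB] /orP[dA | dB]; first exact: linkA.
- exact: linked_trans (linkA _ _ cA aA) (linked_trans linkAB (linkB _ _ bB dB)).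
- exact: linked_trans (linkB _ _ cB bB) (linked_trans linkBA (linkA _ _ aA dA)).
- exact: linkB.
Qed.

Definition left_of (A B : {fset cell}) : Prop :=
  forall x y, x \in A -> y \in B -> column x < column y.

Lemma left_of_disjoint A B : left_of A B -> [disjoint A & B].
Proof. by move=> AB; apply/fdisjointP => c cA; apply/negP => /(AB c c cA); rewrite ltxx. Qed.

Lemma left_of_setUDl A B : left_of A B -> (A `|` B) `\` A = B.
Proof.
move=> /left_of_disjoint AB; rewrite fsetDUl fsetDv fset0U.
by apply/fsetDidPl; rewrite fdisjoint_sym.
Qed.

Lemma left_of_translate t A B : left_of A B -> left_of (translate t A) (translate t B).
Proof.
move=> AB _ _ /imfsetP[x /= xA ->] /imfsetP[y /= yB ->].
by rewrite !column_translate_cell ltrD2r; apply: AB.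
Qed.

Lemma left_of_split_sub A1 B1 A2 B2 : A1 `|` B1 = A2 `|` B2 ->
  left_of A1 B1 -> left_of A2 B2 -> A1 `<=` A2 \/ A2 `<=` A1.
Proof.
move=> eqU A1B1 A2B2; case: (boolP (A1 `<=` A2)) => [|/fsubsetPn[x xA1 xA2']]; first by left.
right; apply/fsubsetP => y yA2.
have : x \in A2 `|` B2 by rewrite -eqU in_fsetU xA1.
rewrite in_fsetU (negbTE xA2') /= => xB2.
have : y \in A1 `|` B1 by rewrite eqU in_fsetU yA2.
rewrite in_fsetU => /orP[// | yB1].
by have := A1B1 x y xA1 yB1; rewrite ltNge ltW // A2B2.
Qed.

Lemma left_of_split_unique A1 B1 A2 B2 : #|` A1| = #|` A2| -> A1 `|` B1 = A2 `|` B2 ->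
  left_of A1 B1 -> left_of A2 B2 -> A1 = A2 /\ B1 = B2.
Proof.
move=> cardA eqU A1B1 A2B2.
have eqA : A1 = A2.
  apply/fsetP; case: (left_of_split_sub eqU A1B1 A2B2).
  - by move/(fsubset_cardP cardA).
  - by move/(fsubset_cardP (esym cardA)) => eqA21 x; rewrite eqA21.
by split=> //; rewrite -(left_of_setUDl A1B1) -(left_of_setUDl A2B2) eqU eqA.
Qed.

Lemma tclass_mirror_if_inj b P Q :
  tclass (mirror_if b P) = tclass (mirror_if b Q) -> tclass P = tclass Q.
Proof. by case: b => //; apply: tclass_mirror_inj. Qed.

Lemma exists_leftmost_oriented B o : B != fset0 -> exists b q,
  [/\ q \in mirror_if b B, q.2 = o & forall c, c \in mirror_if b B -> column q <= column c].
Proof.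
move=> B0; have [q qB qmin] := fset_arg_min column B0.
case: (eqVneq q.2 o) => [qo | qo]; first by exists false, q.
exists true, (mirror_cell q); split; first exact: in_imfset.
- by rewrite mirror_cell_orientation; case: (q.2) o qo => [] [].
- by move=> _ /imfsetP[c /= cB ->]; rewrite !column_mirror_cell qmin.
Qed.

Lemma glue_polyiamonds l m A B : (0 < l)%N -> (0 < m)%N ->
  polyiamond l A -> polyiamond m B -> exists b t,
    left_of A (translate t (mirror_if b B)) /\
    polyiamond (l + m) (A `|` translate t (mirror_if b B)).
Proof.
move=> l0 m0 [cardA conA] polyB.
have A0 : A != fset0 by rewrite -cardfs_gt0 cardA.
have B0 : B != fset0 by rewrite -cardfs_gt0 (proj1 polyB).
have [a aA amax] := fset_arg_max column A0.
have [b [q [qB qn qmin]]] := exists_leftmost_oriented (right_neighbour a).2 B0.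
have [t tq] := translate_cell_onto qn.
have [cardB' conB'] := polyiamond_translate t (polyiamond_mirror_if b polyB).
have sepAB : left_of A (translate t (mirror_if b B)).
  move=> x _ xA /imfsetP[y /= yB ->].
  have := column_right_neighbour a; rewrite -tq !column_translate_cell.
  by have := amax x xA; have := qmin y yB; lia.
exists b, t; split => //; split.
- by rewrite cardfsU (disjoint_fsetI0 (left_of_disjoint sepAB)) cardfs0 subn0 cardA cardB'.
- apply: (edge_connected_union conA conB' aA _ (adj_right_neighbour a)).
  by rewrite -tq; apply: in_imfset.
Qed.

Lemma glue_tclass_inj b A1 B1 A2 B2 t1 t2 : #|` A1| = #|` A2| ->
  left_of A1 (translate t1 (mirror_if b B1)) ->
  left_of A2 (translate t2 (mirror_if b B2)) ->
  tclass (A1 `|` translate t1 (mirror_if b B1)) =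
    tclass (A2 `|` translate t2 (mirror_if b B2)) ->
  tclass A1 = tclass A2 /\ tclass B1 = tclass B2.
Proof.
move=> cardA sep1 sep2 /tclassP[s]; rewrite translateU translateD => eqU.
have := left_of_translate (t := s) sep2; rewrite translateD => sep2s.
have cardAs : #|` A1| = #|` translate s A2| by rewrite card_translate.
have [-> eqB] := left_of_split_unique cardAs eqU sep1 sep2s.
split; first exact: tclass_translate.
apply: (@tclass_mirror_if_inj b).
by rewrite -(tclass_translate t1) eqB tclass_translate.
Qed.

Lemma path_coord_bound c s : path adj c s ->
  (`|(last c s).1.1 - c.1.1| <= (size s)%:Z) && (`|(last c s).1.2 - c.1.2| <= (size s)%:Z).
Proof.
elim: s c => [|d s IH] c /=; first by rewrite !subrr normr0.
case/andP => /adj_coord_bound cd /IH; move: (last d s) => e de; clear IH; lia.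
Qed.

Lemma linked_coord_bound (P : {fset cell}) (c d : cell) : c \in P -> linked P c d ->
  (`|d.1.1 - c.1.1| < #|` P|%:Z) && (`|d.1.2 - c.1.2| < #|` P|%:Z).
Proof.
move=> cP [s [cs <- sP]]; case/shortenP: cs => s' cs' uniq_s' sub_s'.
have : (size (c :: s') <= #|` P|)%N.
  apply: uniq_leq_size => // e; rewrite inE => /predU1P[-> // | /sub_s' es].
  exact: (allP sP).
move=> /= size_s; have := path_coord_bound cs'; move: (last c s') => e; lia.
Qed.

Local Open Scope classical_set_scope.

Definition box (n : nat) : set cell := [set c | `|c.1.1| < n%:Z /\ `|c.1.2| < n%:Z].

Lemma finite_box n : finite_set (box n).
Proof.
pose f (p : 'I_(2 * n) * 'I_(2 * n) * bool) : cell :=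
  ((p.1.1%:Z - n%:Z, p.1.2%:Z - n%:Z), p.2).
apply: (@sub_finite_set _ _ (f @` setT)); last exact/finite_image/finite_finset.
move=> [[x y] o] [/= xn yn].
have lt_x : (absz (x + n%:Z)%R < 2 * n)%N by lia.
have lt_y : (absz (y + n%:Z)%R < 2 * n)%N by lia.
by exists (Ordinal lt_x, Ordinal lt_y, o) => //; rewrite /f /=; congr (_, _, _); lia.
Qed.

Definition polyiamond_classes (n : nat) : set (set {fset cell}) :=
  [set C | exists P, polyiamond n P /\ C = tclass P].

Lemma TE n : T n = #|` fset_set (polyiamond_classes n)|.
Proof. by []. Qed.

(* [fset_set] is [fset0] on infinite sets, so counting through [T] needs this. *)
Lemma finite_polyiamond_classes n : finite_set (polyiamond_classes n).
Proof.
apply: (@sub_finite_set _ _ (tclass @` [set` fpowerset (fset_set (box n))])).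
  move=> _ [P [[cardP conP] ->]]; case: (fset_0Vmem P) => [-> | [c cP]].
    by exists fset0; rewrite //= fpowersetE fsub0set.
  exists (translate (- c.1.1, - c.1.2) P); last exact: tclass_translate.
  rewrite /= fpowersetE; apply/fsubsetP => _ /imfsetP[d /= dP ->].
  rewrite in_fset_set ?inE /=; last exact: finite_box.
  by move: (linked_coord_bound cP (conP c d cP dP)); rewrite cardP => /andP.
by apply: finite_image; apply: finite_fset.
Qed.
#[local] Hint Resolve finite_polyiamond_classes : core.

Local Close Scope classical_set_scope.



Definition glued (l : nat) (CA CB C : set {fset cell}) (b : bool) : Prop :=
  exists A B t, [/\ #|` A| = l, CA = tclass A, CB = tclass B,
    left_of A (translate t (mirror_if b B)) &
    C = tclass (A `|` translate t (mirror_if b B))].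

Lemma T_mul_le_double l m : (0 < l)%N -> (0 < m)%N -> (T l * T m <= 2 * T (l + m))%N.
Proof.
move=> l0 m0; rewrite !TE [(2 * _)%N]mulnC.
have -> : 2%N = #|` [fset true; false]| by rewrite cardfs2.
rewrite -!cardfsM; apply: (card_le_of_rel (R := fun p q => glued l p.1 p.2 q.1 q.2)).
- move=> [CA CB]; rewrite in_fsetM !in_fset_set //=.
  case/andP=> /set_mem[A [polyA ->]] /set_mem[B [polyB ->]].
  have [b [t [sepAB polyAB]]] := glue_polyiamonds l0 m0 polyA polyB.
  exists (tclass (A `|` translate t (mirror_if b B)), b); last by exists A, B, t; case: polyA.
  rewrite in_fsetM in_fset_set //=; apply/andP; split; last by rewrite !inE; case: (b).
  by apply: mem_set; exists (A `|` translate t (mirror_if b B)).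
- move=> [CA CB] [CA' CB'] [C b] _ _ /=.
  move=> [A [B [t [cardA -> -> sepAB ->]]]] [A' [B' [t' [cardA' -> -> sepAB' eqC]]]].
  by have [-> ->] := glue_tclass_inj (etrans cardA (esym cardA')) sepAB sepAB' eqC.
Qed.

Theorem proposition2 (l m : nat) : (0 < l)%N -> (0 < m)%N ->
  (T l * T m <= 3 * T (l + m))%N.
Proof.
move=> l0 m0; apply: leq_trans (T_mul_le_double l0 m0) _.
by rewrite leq_mul2r orbT.
Qed.
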